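(* Let $f_n(x)=\sum_{[\pi]\in\mathfrak{C}_{n}^o}x^{\operatorname{drop}_{oo}([\pi])}$. Then $f_1=1$ and for every $n\ge1$: (i) $f_{2n}=nf_{2n-1}-x\frac{d}{dx}f_{2n-1}+\frac{d}{dx}f_{2n-1}$; (ii) $f_{2n+1}=nxf_{2n}-x^2\frac{d}{dx}f_{2n}+x\frac{d}{dx}f_{2n}$.
   Context: For $n\ge1$, a cycle on $[n]=\{1,\dots,n\}$ is an equivalence class $[\pi]$ of permutations $\pi=\pi_1\cdots\pi_n$ of $[n]$ (in one-line notation) under cyclic rotation of the entries; the set of cycles on $[n]$ is $\mathfrak{C}_n$. Each cycle is represented by the permutation $\pi$ with $\pi_1=1$, and indices are read modulo $n$. A drop of $[\pi]$ is a consecutive pair $(\pi_i,\pi_{i+1})$, $1\le i\le n$, with $\pi_i>\pi_{i+1}$. By convention, the unique cycle $[(1)]\in\mathfrak{C}_1$ has exactly one drop $(\star,1)$, where $\star$ is considered neither even nor odd. A drop $(a,b)$ is odd-odd if $a,b$ are both odd; $\operatorname{drop}_{oo}([\pi])$ is the number of odd-odd drops of $[\pi]$. $\mathfrak{C}_n^o$ is the set of cycles $[\pi]\in\mathfrak{C}_n$ such that for every drop $(\pi_i,\pi_{i+1})$, the entry $\pi_{i+1}$ is odd. *)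

From mathcomp Require Import all_boot all_order all_algebra.
Set Implicit Arguments. Unset Strict Implicit. Unset Printing Implicit Defensive.
Import GRing.Theory.
Local Open Scope ring_scope.

(* A cycle on [n] = {1..n} is represented by its unique representative
   permutation pi (one-line notation, a seq nat) with pi_1 = 1. *)
Definition cycles (n : nat) : seq (seq nat) :=
  [seq s <- permutations (iota 1 n) | head 0%N s == 1%N].

(* The first component is an [option nat]; [None] stands
   for the special symbol (star), used only for the unique cycle on [1],
   whose unique drop is (star, 1) by convention. *)
Definition drops (s : seq nat) : seq (option nat * nat) :=
  if size s == 1%N then [:: (None, 1%N)]
  else [seq (Some p.1, p.2) | p <- zip s (rot 1 s) & (p.2 < p.1)%N].

Definition odd_opt (a : option nat) : bool :=
  if a is Some k then odd k else false.

Definition is_oo_drop (d : option nat * nat) : bool := odd_opt d.1 && odd d.2.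

Definition drop_oo (s : seq nat) : nat := count is_oo_drop (drops s).

Definition in_Co (s : seq nat) : bool := all (fun d => odd d.2) (drops s).

Definition f (n : nat) : {poly int} :=
  \sum_(s <- cycles n | in_Co s) 'X^(drop_oo s).

From mathcomp Require Import all_boot all_order all_algebra.
From mathcomp Require Import ring zify.
Import GRing.Theory.

Set Implicit Arguments.
Unset Strict Implicit.
Unset Printing Implicit Defensive.

(* Every cycle on [n+1] arises exactly once by inserting n+1 into a cycle on
   [n] between two cyclically consecutive entries (a, b), never in front of the
   leading 1.  The pair (a, b) is replaced by (a, n+1), which is not a drop, and
   by the drop (n+1, b).  Hence the new cycle lies in C^o iff the old one does
   and b is odd, and it loses the odd-odd drop (a, b) if there was one and gains
   (n+1, b) iff n+1 is odd.  A cycle of C_n^o with k odd-odd drops has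
   ceil(n/2) pairs (a, b) with b odd, k of which are odd-odd drops, so it
   contributes (ceil(n/2) - k) x^k + k x^(k-1) = ceil(n/2) x^k - x (x^k)' + (x^k)'
   to f_(n+1) / x^[n+1 odd].  Summing over C_n^o gives
   f_(n+1) = x^[n+1 odd] (ceil(n/2) f_n - x f_n' + f_n'). *)

Section ZipRot.
Variables S T : Type.
Implicit Types (s : seq S) (t : seq T).

Lemma take_zip k s t : take k (zip s t) = zip (take k s) (take k t).
Proof. by elim: k s t => [|k IHk] [|x s] [|y t] //=; rewrite IHk. Qed.

Lemma drop_zip k s t : drop k (zip s t) = zip (drop k s) (drop k t).
Proof.
elim: k s t => [|k IHk] [|x s] [|y t] //=; first by case: (drop k t).
by case: (drop k s).
Qed.

Lemma rot_zip k s t : size s = size t -> rot k (zip s t) = zip (rot k s) (rot k t).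
Proof. by move=> eq_st; rewrite /rot drop_zip take_zip zip_cat // !size_drop eq_st. Qed.

End ZipRot.

Definition cyclic_pairs (s : seq nat) := zip s (rot 1 s).

Definition insert_after j x (s : seq nat) := take j.+1 s ++ x :: drop j.+1 s.

Lemma size_cyclic_pairs s : size (cyclic_pairs s) = size s.
Proof. by rewrite size_zip size_rot minnn. Qed.

Lemma mem_cyclic_pairs s p : p \in cyclic_pairs s -> (p.1 \in s) && (p.2 \in s).
Proof.
move=> sp; apply/andP; split.
  by rewrite -[s in _ \in s](@unzip1_zip _ _ s (rot 1 s)) ?size_rot // map_f.
by rewrite -(mem_rot 1) -(@unzip2_zip _ _ s (rot 1 s)) ?size_rot // map_f.
Qed.

Lemma cyclic_pairs_rot k s : cyclic_pairs (rot k s) = rot k (cyclic_pairs s).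
Proof. by rewrite /cyclic_pairs rot_zip ?size_rot // rot_rot. Qed.

Lemma cyclic_pairs_cons y u :
  cyclic_pairs (y :: u) = rcons (zip (belast y u) u) (last y u, y).
Proof. by rewrite /cyclic_pairs rot1_cons {1}lastI zip_rcons // size_belast. Qed.

Lemma cyclic_pairs_rcons y u x : cyclic_pairs (rcons (y :: u) x) =
  zip (belast y u) u ++ [:: (last y u, x); (x, y)].
Proof.
rewrite /cyclic_pairs {2}rcons_cons rot1_cons zip_rcons ?size_rcons //.
by rewrite {1}lastI zip_rcons ?size_belast // -!cats1 -catA.
Qed.

Lemma perm_insert_after j x s : perm_eql (insert_after j x s) (x :: s).
Proof. by apply/permPl; rewrite /insert_after -cat1s perm_catCA cat_take_drop. Qed.

Lemma rot_insert_after j x s :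
  j < size s -> rot j.+2 (insert_after j x s) = rcons (rot j.+1 s) x.
Proof.
move=> lt_js; rewrite /insert_after -cat_rcons.
have size_l : size (rcons (take j.+1 s) x) = j.+2 by rewrite size_rcons size_takel.
by rewrite /rot drop_size_cat // take_size_cat // -cats1 catA cats1.
Qed.

(* Rotate the sequence so that the insertion point is at its end. *)
Lemma cyclic_pairs_insert_after j x s (p := nth (0, 0) (cyclic_pairs s) j) :
  j < size s -> exists w,
  perm_eq (cyclic_pairs s) (rcons w p) /\
  perm_eq (cyclic_pairs (insert_after j x s)) (w ++ [:: (p.1, x); (x, p.2)]).
Proof.
move=> lt_js; have := size_rot j.+1 s.
case def_r: (rot j.+1 s) => [|y u] size_r; first by move: lt_js; rewrite -size_r.
have pairs_r := cyclic_pairs_cons y u; rewrite -def_r cyclic_pairs_rot in pairs_r.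
have -> : p = (last y u, y).
  have := congr1 (last (0, 0)) pairs_r; rewrite last_rcons => <-.
  by rewrite /rot last_cat (take_nth (0, 0)) ?size_cyclic_pairs // last_rcons.
exists (zip (belast y u) u); split; first by rewrite -pairs_r perm_sym perm_rot.
by rewrite -(perm_rot j.+2) -cyclic_pairs_rot rot_insert_after // def_r cyclic_pairs_rcons.
Qed.

Definition is_drop (p : nat * nat) := p.2 < p.1.
Definition Co_pair (p : nat * nat) := is_drop p ==> odd p.2.
Definition oo_pair (p : nat * nat) := [&& is_drop p, odd p.1 & odd p.2].

(* The conventional drop (star, 1) of the one-entry cycle [1] plays the role
   of its only pair (1, 1): neither is an odd-odd drop, and both are allowed in C^o. *)
Lemma in_Co_pairs s : in_Co s = all Co_pair (cyclic_pairs s).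
Proof.
rewrite /in_Co /drops; case: ifP => [|size_s]; last first.
  by rewrite all_map all_filter; apply: eq_all => -[a b].
by case: s => [|x []] //= _; rewrite /Co_pair /is_drop ltnn.
Qed.

Lemma drop_oo_pairs s : drop_oo s = count oo_pair (cyclic_pairs s).
Proof.
rewrite /drop_oo /drops; case: ifP => [|size_s]; last first.
  by rewrite count_map count_filter; apply: eq_count => -[a b]; rewrite /= andbC.
by case: s => [|x []] //= _; rewrite /oo_pair /is_drop ltnn.
Qed.

Section InsertMax.

Variables (m j : nat) (s : seq nat).
Hypotheses (lt_s_m : all (fun x => x < m) s) (lt_j_s : j < size s).
Let p := nth (0, 0) (cyclic_pairs s) j.

Let p_lt_m : (p.1 < m) && (p.2 < m).
Proof.
have /mem_cyclic_pairs/andP[s_p1 s_p2] : p \in cyclic_pairs s.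
  by rewrite mem_nth ?size_cyclic_pairs.
by rewrite (allP lt_s_m _ s_p1) (allP lt_s_m _ s_p2).
Qed.

Lemma in_Co_insert_max : in_Co (insert_after j m s) = in_Co s && odd p.2.
Proof.
have [w [pairs_s pairs_ins]] := cyclic_pairs_insert_after m lt_j_s.
case/andP: p_lt_m => lt_p1m lt_p2m.
rewrite !in_Co_pairs (perm_all _ pairs_s) (perm_all _ pairs_ins) -cats1 !all_cat /=.
rewrite /Co_pair /is_drop /= ltnNge ltnW //= lt_p2m /=.
by case: (odd p.2); rewrite ?implybT ?andbT ?andbF.
Qed.

Lemma drop_oo_insert_max :
  drop_oo (insert_after j m s) = drop_oo s - oo_pair p + odd m && odd p.2.
Proof.
have [w [pairs_s pairs_ins]] := cyclic_pairs_insert_after m lt_j_s.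
case/andP: p_lt_m => lt_p1m lt_p2m.
rewrite !drop_oo_pairs (permP pairs_s) (permP pairs_ins) -cats1 !count_cat /=.
by rewrite /oo_pair /is_drop /= ltnNge ltnW //= lt_p2m /= !addn0 addnK.
Qed.

End InsertMax.

Lemma mem_cycles n t : (t \in cycles n) = perm_eq t (iota 1 n) && (head 0 t == 1).
Proof. by rewrite mem_filter mem_permutations andbC. Qed.

Lemma cycles_uniq n : uniq (cycles n).
Proof. by rewrite filter_uniq // permutations_uniq. Qed.

Lemma size_cycles n s : s \in cycles n -> size s = n.
Proof. by rewrite mem_cycles => /andP[/perm_size -> _]; rewrite size_iota. Qed.

Lemma cycles_lt n s : s \in cycles n -> all (fun x => x < n.+1) s.
Proof.
rewrite mem_cycles => /andP[/perm_mem s_iota _]; apply/allP=> x.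
by rewrite s_iota mem_iota add1n => /andP[].
Qed.

Lemma index_insert_after j x s :
  j < size s -> x \notin s -> index x (insert_after j x s) = j.+1.
Proof.
move=> lt_js s'x; rewrite index_cat size_takel // ifN ?(contra (@mem_take _ _ _ _)) //=.
by rewrite eqxx addn0.
Qed.

Lemma insert_after_inj j1 j2 x s1 s2 :
  j1 < size s1 -> j2 < size s2 -> x \notin s1 -> x \notin s2 ->
  insert_after j1 x s1 = insert_after j2 x s2 -> j1 = j2 /\ s1 = s2.
Proof.
move=> lt_js1 lt_js2 s1'x s2'x eq_ins.
have [eq_j] : j1.+1 = j2.+1.
  by rewrite -(index_insert_after lt_js1 s1'x) eq_ins index_insert_after.
split=> //; subst j2; move: eq_ins; rewrite /insert_after => /eqP.
rewrite eqseq_cat ?size_takel // => /andP[/eqP eq_take /eqP[eq_drop]].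
by rewrite -(cat_take_drop j1.+1 s1) -(cat_take_drop j1.+1 s2) eq_take eq_drop.
Qed.

Lemma insert_after_take_drop j t :
  j.+1 < size t -> insert_after j (nth 0 t j.+1) (take j.+1 t ++ drop j.+2 t) = t.
Proof.
move=> lt_jt; rewrite /insert_after take_size_cat ?drop_size_cat ?size_takel 1?ltnW //.
by rewrite -drop_nth // cat_take_drop.
Qed.

Lemma iota1S n : iota 1 n.+1 = rcons (iota 1 n) n.+1.
Proof. by rewrite -{1}[n.+1]addn1 iotaD add1n cats1. Qed.

Lemma insert_after_cycles n j s :
  s \in cycles n -> j < n -> insert_after j n.+1 s \in cycles n.+1.
Proof.
rewrite !mem_cycles => /andP[s_iota s_head] lt_jn; apply/andP; split.
  by rewrite perm_insert_after iota1S perm_sym perm_rcons perm_cons perm_sym.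
by case: s s_head {s_iota}.
Qed.

Lemma cycles_insert_after n t : 0 < n -> t \in cycles n.+1 ->
  exists2 js, (js.2 \in cycles n) && (js.1 < n) & t = insert_after js.1 n.+1 js.2.
Proof.
move=> n_gt0 t_cyc; have := t_cyc; rewrite mem_cycles => /andP[t_iota t_head].
have t_max : n.+1 \in t by rewrite (perm_mem t_iota) mem_iota ltnS leqnn.
have size_t : size t = n.+1 by rewrite (size_cycles t_cyc).
case def_i: (index n.+1 t) => [|j].
  by move: t_head def_i; case: t {t_cyc t_iota t_max size_t} => //= x t /eqP->; case: n n_gt0.
have lt_jn : j < n by rewrite -ltnS -size_t -def_i index_mem.
have t_ins : insert_after j n.+1 (take j.+1 t ++ drop j.+2 t) = t.
  by rewrite -{1}(nth_index 0 t_max) def_i insert_after_take_drop // size_t.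
exists (j, take j.+1 t ++ drop j.+2 t) => //=; rewrite lt_jn andbT mem_cycles.
apply/andP; split; last by case: t {t_cyc t_iota t_max size_t def_i t_ins} t_head.
rewrite -(perm_cons n.+1) -(perm_insert_after j) t_ins (perm_trans t_iota) //.
by rewrite iota1S perm_rcons perm_refl.
Qed.

Lemma cycles_succ n : 0 < n ->
  perm_eq (cycles n.+1) [seq insert_after j n.+1 s | s <- cycles n, j <- iota 0 n].
Proof.
move=> n_gt0; apply: uniq_perm; first exact: cycles_uniq.
- apply: allpairs_uniq; [exact: cycles_uniq | exact: iota_uniq |].
  move=> _ _ /allpairsP[[s1 j1] [/= s1_cyc + ->]] /allpairsP[[s2 j2] [/= s2_cyc + ->]].
  rewrite !mem_iota /= => lt_j1 lt_j2.
  have size_s1 := size_cycles s1_cyc; have size_s2 := size_cycles s2_cyc.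
  have s1'max : n.+1 \notin s1 by apply/negP=> /(allP (cycles_lt s1_cyc)); rewrite ltnn.
  have s2'max : n.+1 \notin s2 by apply/negP=> /(allP (cycles_lt s2_cyc)); rewrite ltnn.
  by case/insert_after_inj; rewrite ?size_s1 ?size_s2 // => -> ->.
move=> t; apply/idP/allpairsP=> [t_cyc | [[s j] [/= s_cyc]]].
  have [[j s] /= /andP[s_cyc lt_jn] ->] := cycles_insert_after n_gt0 t_cyc.
  by exists (s, j); rewrite mem_iota.
by rewrite mem_iota => lt_jn ->; apply: insert_after_cycles.
Qed.

Lemma count_odd_iota1 n : count odd (iota 1 n) = uphalf n.
Proof.
elim: n => // n IHn; rewrite iota1S -cats1 count_cat IHn /= addn0.
by rewrite uphalf_half; case: (odd n); rewrite /= ?addn0 ?addn1.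
Qed.

Lemma count_odd_cyclic_pairs n s : s \in cycles n ->
  count (fun p : nat * nat => odd p.2) (cyclic_pairs s) = uphalf n.
Proof.
rewrite mem_cycles -count_odd_iota1 /cyclic_pairs => /andP[s_iota _].
rewrite -(count_map snd odd) [map _ _]unzip2_zip ?size_rot //.
by apply/permP; rewrite perm_rot.
Qed.

Local Open Scope ring_scope.

Lemma mulX_derivXn (R : nzRingType) k : 'X * ('X^k)^`() = 'X^k *+ k :> {poly R}.
Proof. by rewrite derivXn; case: k => [|k]; rewrite ?mulr0n ?mulr0 // mulrnAr -exprS. Qed.

Lemma sum_Xn_sub_count (R : nzRingType) (T : Type) (A D : pred T) (P : seq T) :
  subpred D A -> let k := count D P in
  \sum_(p <- P | A p) ('X^(k - D p) : {poly R}) =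
    (count A P)%:R * 'X^k - 'X * ('X^k)^`() + ('X^k)^`().
Proof.
move=> sDA k.
have count_AD : count (fun p => A p && D p) P = k.
  by apply: eq_count => p; case: (boolP (D p)) => [/sDA ->|]; rewrite ?andbF.
have count_A : count A P = (k + count (fun p => A p && ~~ D p) P)%N.
  rewrite -count_AD -size_filter -(count_predC D) !count_filter.
  by congr (_ + _)%N; apply: eq_count => p /=; rewrite andbC.
rewrite (bigID D) /= count_A mulX_derivXn derivXn mulr_natl mulrnDr.
rewrite (eq_bigr (fun=> 'X^(k.-1))) => [|p /andP[_ ->]]; last by rewrite subn1.
rewrite [X in _ + X](eq_bigr (fun=> 'X^k)) => [|p /andP[_ /negbTE ->]]; last by rewrite subn0.
by rewrite !big_const_seq !iter_addr_0 count_AD (addrC ('X^k *+ k)) addrK addrC.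
Qed.

Lemma f_succ_pairs n : (0 < n)%N ->
  f n.+1 = 'X^(odd n.+1) * \sum_(s <- cycles n | in_Co s)
             \sum_(p <- cyclic_pairs s | odd p.2) 'X^(drop_oo s - oo_pair p).
Proof.
move=> n_gt0; rewrite /f big_mkcond (perm_big _ (cycles_succ n_gt0)) big_allpairs_dep /=.
rewrite mulr_sumr [RHS]big_mkcond; apply: eq_big_seq => s s_cyc /=.
have lt_s := cycles_lt s_cyc; have size_s := size_cycles s_cyc.
rewrite (big_nth (0, 0)) size_cyclic_pairs /index_iota subn0 -[in iota 0 n]size_s.
have [Co_s | Co'_s] := boolP (in_Co s); last first.
  rewrite big1_seq // => j /andP[_]; rewrite mem_iota => /andP[_ lt_js].
  by rewrite (in_Co_insert_max lt_s lt_js) (negbTE Co'_s).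
rewrite mulr_sumr [RHS]big_mkcond; apply: eq_big_seq => j.
rewrite mem_iota => /andP[_ lt_js].
rewrite (in_Co_insert_max lt_s lt_js) Co_s (drop_oo_insert_max lt_s lt_js) /=.
by case: ifP => // ->; rewrite andbT exprD mulrC.
Qed.

Lemma f_succ n : (0 < n)%N ->
  f n.+1 = 'X^(odd n.+1) * ((uphalf n)%:R * f n - 'X * (f n)^`() + (f n)^`()).
Proof.
move=> n_gt0; rewrite f_succ_pairs //; congr (_ * _).
rewrite /f raddf_sum !mulr_sumr -sumrB -big_split /=.
rewrite big_seq_cond [RHS]big_seq_cond; apply: eq_bigr => s /andP[s_cyc _].
rewrite drop_oo_pairs -(count_odd_cyclic_pairs s_cyc).
by apply: sum_Xn_sub_count => -[a b] /and3P[].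
Qed.

Theorem lemma3p1 :
  f 1 = 1 /\
  (forall n : nat, (1 <= n)%N ->
     f (2 * n) = n%:R * f (2 * n - 1) - 'X * (f (2 * n - 1))^`() + (f (2 * n - 1))^`()
  /\ f (2 * n + 1) = n%:R * 'X * f (2 * n) - 'X ^+ 2 * (f (2 * n))^`() + 'X * (f (2 * n))^`()).
Proof.
split=> [|n n_gt0]; first by rewrite /f big_cons big_nil /= addr0.
have def_2n : (2 * n = ((n.-1).*2.+1).+1)%N by rewrite -muln2; lia.
have def_2n1 : (2 * n - 1 = (n.-1).*2.+1)%N by rewrite -muln2; lia.
split.
  rewrite [in LHS]def_2n def_2n1 f_succ //= odd_double /= half_double prednK //.
  by rewrite mul1r.
rewrite addn1 f_succ ?muln_gt0 // mul2n uphalf_double /= odd_double /= expr1.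
ring.
Qed.
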